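(* Let Assumptions 1 and 2 hold and consider Algorithm 2 with $\eta\in(0,1/L_{\mathrm{avg}}]$. Let $\Delta_k=v_k-\nabla f(y_k)$, let $x_{k+1}$ be the $\epsilon_k$-optimal solution of the $k$-th subproblem, and let $u_k\in\mathbb{R}^d$ be any random vector that is independent of the mini-batch $\mathcal{B}_k$ given the past (i.e. determined by $\mathcal B_0,\dots,\mathcal B_{k-1}$). Then $$\mathbb{E}\langle\Delta_k,u_k-x_{k+1}\rangle\le\frac{3\eta}{2}\,\mathbb{E}\|\Delta_k\|_{H^{-1}}^2+\epsilon_k.$$
   Context: Setting. $F(x)=f(x)+h(x)$ on $\mathbb{R}^d$, where $f=\frac1n\sum_{i=1}^n f_i$ with each $f_i:\mathbb{R}^d\to\mathbb{R}$ convex and differentiable, and $h:\mathbb{R}^d\to\mathbb{R}\cup\{+\infty\}$ is proper, convex, lower semicontinuous, with closed domain $\mathrm{dom}\,h$. $H$ is a fixed symmetric positive definite $d\times d$ matrix; $\langle x,y\rangle_H=x^\top Hy$, $\|x\|_H=\sqrt{x^\top Hx}$, $\|x\|_{H^{-1}}=\sqrt{x^\top H^{-1}x}$, and $\langle x,y\rangle=x^\top y$. Assumption 1: each $f_i$ is $L_i$-smooth w.r.t. the $H$-norm, i.e. $\|\nabla f_i(x)-\nabla f_i(y)\|_{H^{-1}}\le L_i\|x-y\|_H$ for all $x,y$; $L_{\mathrm{avg}}=\frac1n\sum_{i=1}^nL_i$. Assumption 2: $f$ is $\mu$-strongly convex w.r.t. the $H$-norm for some $\mu>0$, i.e. $f(y)\ge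 f(x)+\langle\nabla f(x),y-x\rangle+\frac\mu2\|y-x\|_H^2$ for all $x,y$. Subproblem: for $y,v\in\mathbb{R}^d$ and $\eta>0$ let $q(x)=h(x)+\frac1{2\eta}\|x-y+\eta H^{-1}v\|_H^2$; a point $x^+$ is an $\epsilon$-optimal solution if $q(x^+)\le\min_x q(x)+\epsilon$. Algorithm 2 (one outer iteration $s$, given $\tilde x_s$ and parameters $\eta,\tau\in(0,1),\mu,b,T$ and tolerances $\epsilon_0,\dots,\epsilon_{T-1}\ge0$): compute $\nabla f(\tilde x_s)$; set $x_0=z_0=\tilde x_s$; for $k=0,\dots,T-1$: $y_k=\frac{1}{1+\tau}x_k+\frac{\tau}{1+\tau}z_k$; draw a mini-batch $\mathcal{B}_k$ of $b$ indices sampled independently (of each other and of the past) from $\{1,\dots,n\}$ with $\Pr(i)=p_i=L_i/(nL_{\mathrm{avg}})$; $v_k=\frac1b\sum_{i\in\mathcal B_k}\frac{\nabla f_i(y_k)-\nabla f_i(\tilde x_s)}{np_i}+\nabla f(\tilde x_s)$; let $x_{k+1}$ be an $\epsilon_k$-optimal solution of the subproblem with $y=y_k$, $v=v_k$; $g_{k+1}=(y_k-x_{k+1})/\eta$; $z_{k+1}=z_k+\tau(y_k-z_k)-\frac\tau\mu g_{k+1}$. Finally $\tilde x_{s+1}=x_T$. Expectations are over the mini-batch randomness. *)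

From Stdlib Require Import Reals.
From mathcomp Require Import ssreflect ssrfun ssrbool eqtype ssrnat seq choice.
From mathcomp Require Import fintype finfun bigop.
Set Implicit Arguments. Unset Strict Implicit.

Local Open Scope R_scope.

Definition vec (d : nat) := 'I_d -> R.
Definition mat (d : nat) := 'I_d -> 'I_d -> R.

Definition rsum (I : finType) (F : I -> R) : R := \big[Rplus/0]_(i : I) F i.
Definition rprod (I : finType) (F : I -> R) : R := \big[Rmult/1]_(i : I) F i.

Definition vadd d (x y : vec d) : vec d := fun i => x i + y i.
Definition vsub d (x y : vec d) : vec d := fun i => x i - y i.
Definition vscale d (a : R) (x : vec d) : vec d := fun i => a * x i.

Definition dot d (x y : vec d) : R := rsum (fun i => x i * y i).
Definition mv d (A : mat d) (x : vec d) : vec d := fun i => rsum (fun j => A i j * x j).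
Definition qform d (A : mat d) (x : vec d) : R := dot x (mv A x).
Definition anorm d (A : mat d) (x : vec d) : R := sqrt (qform A x).
(* Euclidean norm (used only for differentiability / topology) *)
Definition enorm d (x : vec d) : R := sqrt (dot x x).

Definition symmetric_mat d (A : mat d) : Prop := forall i j, A i j = A j i.
Definition pos_def d (A : mat d) : Prop :=
  forall x : vec d, (exists i, x i <> 0) -> 0 < qform A x.
Definition is_inverse d (A B : mat d) : Prop :=
  (forall i j, rsum (fun l => A i l * B l j) = if i == j then 1 else 0) /\
  (forall i j, rsum (fun l => B i l * A l j) = if i == j then 1 else 0).

Definition has_gradient d (F : vec d -> R) (G : vec d -> vec d) : Prop :=
  forall x eps, 0 < eps -> exists delta, 0 < delta /\
    forall hv : vec d, enorm hv < delta ->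
      Rabs (F (vadd x hv) - F x - dot (G x) hv) <= eps * enorm hv.

Definition convex_fun d (F : vec d -> R) : Prop :=
  forall x y t, 0 <= t <= 1 ->
    F (vadd (vscale t x) (vscale (1 - t) y)) <= t * F x + (1 - t) * F y.

(* Extended-valued h : R^d -> R u {+oo} is represented by a pair (h, domh):
   its value is h x when domh x holds, and +oo otherwise. *)
Definition proper_ext d (domh : vec d -> Prop) : Prop := exists x, domh x.
Definition convex_ext d (h : vec d -> R) (domh : vec d -> Prop) : Prop :=
  forall x y t, 0 <= t <= 1 -> domh x -> domh y ->
    domh (vadd (vscale t x) (vscale (1 - t) y)) /\
    h (vadd (vscale t x) (vscale (1 - t) y)) <= t * h x + (1 - t) * h y.
Definition lsc_ext d (h : vec d -> R) (domh : vec d -> Prop) : Prop :=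
  forall x,
    (domh x -> forall eps, 0 < eps -> exists delta, 0 < delta /\
       forall y, domh y -> enorm (vsub y x) < delta -> h x - eps < h y) /\
    (~ domh x -> forall M, exists delta, 0 < delta /\
       forall y, domh y -> enorm (vsub y x) < delta -> M < h y).
Definition closed_vset d (S : vec d -> Prop) : Prop :=
  forall x, ~ S x -> exists delta, 0 < delta /\
    forall y, enorm (vsub y x) < delta -> ~ S y.

Definition favg d n (f : 'I_n -> vec d -> R) (x : vec d) : R :=
  / INR n * rsum (fun i => f i x).
Definition gavg d n (g : 'I_n -> vec d -> vec d) (x : vec d) : vec d :=
  fun c => / INR n * rsum (fun i => g i x c).
Definition Lavg n (L : 'I_n -> R) : R := / INR n * rsum L.
Definition prob n (L : 'I_n -> R) (i : 'I_n) : R := L i / (INR n * Lavg L).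

Definition qsub d (H Hinv : mat d) (h : vec d -> R) (eta : R) (y v x : vec d) : R :=
  h x + / (2 * eta) * qform H (vadd (vsub x y) (vscale eta (mv Hinv v))).
(* x is an eps-optimal solution: q(x) <= min q + eps  (q = +oo off dom h) *)
Definition eps_optimal d (H Hinv : mat d) (h : vec d -> R) (domh : vec d -> Prop)
  (eta : R) (y v : vec d) (eps : R) (x : vec d) : Prop :=
  domh x /\ forall x', domh x' -> qsub H Hinv h eta y v x <= qsub H Hinv h eta y v x' + eps.

Definition batch n b := {ffun 'I_b -> 'I_n}.
(* probability of drawing the (ordered, independent) mini-batch B *)
Definition batch_prob n b (L : 'I_n -> R) (B : batch n b) : R :=
  rprod (fun l : 'I_b => prob L (B l)).

Definition Eb n b (L : 'I_n -> R) (F : batch n b -> R) : R :=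
  rsum (fun B : batch n b => batch_prob L B * F B).
(* Histories are lists of mini-batches, MOST RECENT FIRST:
   [:: B_{m-1}; ...; B_0].  Ehist m F = expectation of F over B_0..B_{m-1}. *)
Fixpoint Ehist n b (L : 'I_n -> R) (m : nat) (F : seq (batch n b) -> R) : R :=
  match m with
  | O => F [::]
  | m'.+1 => Ehist L m' (fun hs => Eb L (fun B => F (B :: hs)))
  end.

Definition vest d n b (g : 'I_n -> vec d -> vec d) (L : 'I_n -> R)
  (xt y : vec d) (B : batch n b) : vec d :=
  fun c => / INR b * rsum (fun l : 'I_b =>
              (g (B l) y c - g (B l) xt c) / (INR n * prob L (B l)))
           + gavg g xt c.

(* Algorithm 2 (one outer iteration from xt).  S hs is the inexact subproblem
   solution x_{j+1} chosen after the history hs = [:: B_j; ...; B_0].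
   state hs = (x_j, z_j) with j = size hs. *)
Fixpoint state d n b (eta tau mu : R) (g : 'I_n -> vec d -> vec d)
  (L : 'I_n -> R) (xt : vec d) (S : seq (batch n b) -> vec d)
  (hs : seq (batch n b)) : vec d * vec d :=
  match hs with
  | [::] => (xt, xt)
  | B :: hs' =>
      let (x, z) := state eta tau mu g L xt S hs' in
      let y := vadd (vscale (/ (1 + tau)) x) (vscale (tau / (1 + tau)) z) in
      let x' := S hs in
      let gg := vscale (/ eta) (vsub y x') in
      (x', vsub (vadd z (vscale tau (vsub y z))) (vscale (tau / mu) gg))
  end.

Definition ystep d n b (eta tau mu : R) (g : 'I_n -> vec d -> vec d)
  (L : 'I_n -> R) (xt : vec d) (S : seq (batch n b) -> vec d)
  (hs : seq (batch n b)) : vec d :=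
  let (x, z) := state eta tau mu g L xt S hs in
  vadd (vscale (/ (1 + tau)) x) (vscale (tau / (1 + tau)) z).

(* v_j for a history hs = B_j :: hs' (hs' of length j) *)
Definition vstep d n b (eta tau mu : R) (g : 'I_n -> vec d -> vec d)
  (L : 'I_n -> R) (xt : vec d) (S : seq (batch n b) -> vec d)
  (hs : seq (batch n b)) : vec d :=
  match hs with
  | [::] => fun _ => 0
  | B :: hs' => vest g L xt (ystep eta tau mu g L xt S hs') B
  end.

Definition delta_step d n b (eta tau mu : R) (g : 'I_n -> vec d -> vec d)
  (L : 'I_n -> R) (xt : vec d) (S : seq (batch n b) -> vec d)
  (hs : seq (batch n b)) : vec d :=
  vsub (vstep eta tau mu g L xt S hs) (gavg g (ystep eta tau mu g L xt S (behead hs))).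

(* Fix the history before step k, so that y = y_k, the point u = u_k and the
   deterministic subproblem  Phi = q(y, grad f(y); .)  are fixed, while the
   mini-batch B determines v_B, Delta_B = v_B - grad f(y) and the
   eps-optimal solution X_B of  q_B = q(y, v_B; .).  The argument has three
   ingredients.
   - Unbiasedness: E_B Delta_B = 0, hence E <Delta_B, u - X_B> equals
     E <Delta_B, c - X_B> for every fixed point c.
   - A pointwise bound: both q_B and Phi are (1/eta)-strongly convex in the
     H-norm and differ by the linear term <x - y, Delta_B>.  Comparing the
     eps-optimal X_B with a (r^2)-optimal point c of Phi (mixing at 1/2 and at
     r respectively) and applying Cauchy-Schwarz with weight 2 eta gives
       (2 - 2r) <Delta_B, c - X_B> <= 2 eps + r + (3 - 2r) eta |Delta_B|_{H^-1}^2.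
   - Approximate minimisers exist: Phi is bounded below on dom h (by the
     identity Phi = E_B q_B up to a constant), so such a c exists for every
     r > 0; letting r -> 0 after averaging gives the claim. *)

From Stdlib Require Import Reals Lra Psatz Classical FunctionalExtensionality.
From HB Require Import structures.
From mathcomp Require Import ssreflect ssrfun ssrbool eqtype ssrnat seq choice.
From mathcomp Require Import fintype finfun bigop.
Set Implicit Arguments. Unset Strict Implicit.

Lemma Rplus_associative : associative Rplus.
Proof. by move=> x y z; rewrite Rplus_assoc. Qed.
Lemma Rmult_associative : associative Rmult.
Proof. by move=> x y z; rewrite Rmult_assoc. Qed.
HB.instance Definition _ :=
  Monoid.isComLaw.Build R 0%R Rplus Rplus_associative Rplus_comm Rplus_0_l.
HB.instance Definition _ :=
  Monoid.isComLaw.Build R 1%R Rmult Rmult_associative Rmult_comm Rmult_1_l.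
HB.instance Definition _ := Monoid.isMulLaw.Build R 0%R Rmult Rmult_0_l Rmult_0_r.
HB.instance Definition _ :=
  Monoid.isAddLaw.Build R Rmult Rplus Rmult_plus_distr_r Rmult_plus_distr_l.

Section FiniteSums.
Local Open Scope R_scope.
Variable I : finType.
Implicit Types F G : I -> R.

Lemma rsum_ext F G : (forall i, F i = G i) -> rsum F = rsum G.
Proof. by move=> eFG; apply: eq_bigr => i _. Qed.

Lemma rsum_split F G : rsum (fun i => F i + G i) = rsum F + rsum G.
Proof. exact: big_split. Qed.

Lemma rsum_scal a F : rsum (fun i => a * F i) = a * rsum F.
Proof. by rewrite /rsum big_distrr. Qed.

Lemma rsum0 : rsum (fun _ : I => 0) = 0.
Proof. by rewrite /rsum big1. Qed.

Lemma rsum_le F G : (forall i, F i <= G i) -> rsum F <= rsum G.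
Proof. by move=> leFG; rewrite /rsum; elim/big_ind2: _ => // *; lra. Qed.

Lemma rsum_swap (J : finType) (F : I -> J -> R) :
  rsum (fun i => rsum (fun j => F i j)) = rsum (fun j => rsum (fun i => F i j)).
Proof. exact: exchange_big. Qed.

Lemma rprod_ge0 F : (forall i, 0 <= F i) -> 0 <= rprod F.
Proof. by move=> F0; rewrite /rprod; elim/big_ind: _ => // *; [lra | exact: Rmult_le_pos]. Qed.

End FiniteSums.

Lemma rsum_const (m : nat) (c : R) : rsum (fun _ : 'I_m => c) = (INR m * c)%R.
Proof.
rewrite /rsum big_const_ord; elim: m => [|m IH] /=; first ring.
by rewrite IH; case: m {IH} => [|m] /=; ring.
Qed.

Section VectorAlgebra.
Local Open Scope R_scope.
Variable d : nat.
Implicit Types x y z : vec d.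

Lemma vsub_vadd x y : vsub x y = vadd x (vscale (-1) y).
Proof. by apply: functional_extensionality => i; rewrite /vsub /vadd /vscale; ring. Qed.

Lemma dot_comm x y : dot x y = dot y x.
Proof. by apply: rsum_ext => i; ring. Qed.

Lemma dot_add_l x y z : dot (vadd x y) z = dot x z + dot y z.
Proof. by rewrite /dot -rsum_split; apply: rsum_ext => i; rewrite /vadd; ring. Qed.

Lemma dot_scale_l a x z : dot (vscale a x) z = a * dot x z.
Proof. by rewrite /dot -rsum_scal; apply: rsum_ext => i; rewrite /vscale; ring. Qed.

Lemma dot_sub_l x y z : dot (vsub x y) z = dot x z - dot y z.
Proof. by rewrite vsub_vadd dot_add_l dot_scale_l; ring. Qed.

Lemma dot_add_r x y z : dot z (vadd x y) = dot z x + dot z y.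
Proof. by rewrite dot_comm dot_add_l !(dot_comm z). Qed.

Lemma dot_sub_r x y z : dot z (vsub x y) = dot z x - dot z y.
Proof. by rewrite dot_comm dot_sub_l !(dot_comm z). Qed.

Lemma dot_scale_r a x z : dot z (vscale a x) = a * dot z x.
Proof. by rewrite dot_comm dot_scale_l (dot_comm z). Qed.

Lemma mv_add (A : mat d) x y : mv A (vadd x y) = vadd (mv A x) (mv A y).
Proof.
apply: functional_extensionality => i; rewrite /mv /vadd -rsum_split.
by apply: rsum_ext => j; ring.
Qed.

Lemma mv_scale (A : mat d) a x : mv A (vscale a x) = vscale a (mv A x).
Proof.
apply: functional_extensionality => i; rewrite /mv /vscale -rsum_scal.
by apply: rsum_ext => j; ring.
Qed.

Lemma mv_sub (A : mat d) x y : mv A (vsub x y) = vsub (mv A x) (mv A y).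
Proof. by rewrite !vsub_vadd mv_add mv_scale. Qed.

Lemma dot_mv_sym (A : mat d) x y : symmetric_mat A -> dot x (mv A y) = dot y (mv A x).
Proof.
move=> Asym; rewrite /dot /mv.
transitivity (rsum (fun i => rsum (fun j => x i * A i j * y j))).
  by apply: rsum_ext => i; rewrite -rsum_scal; apply: rsum_ext => j; ring.
rewrite rsum_swap; apply: rsum_ext => j; rewrite -rsum_scal; apply: rsum_ext => i.
by rewrite (Asym i j); ring.
Qed.

Lemma mv_inverse (A B : mat d) v : is_inverse A B -> mv A (mv B v) = v.
Proof.
move=> [AB _]; apply: functional_extensionality => i; rewrite /mv.
transitivity (rsum (fun l => rsum (fun j => A i j * B j l) * v l)).
  transitivity (rsum (fun j => rsum (fun l => A i j * B j l * v l))).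
    by apply: rsum_ext => j; rewrite -rsum_scal; apply: rsum_ext => l; ring.
  rewrite rsum_swap; apply: rsum_ext => l; rewrite Rmult_comm -rsum_scal.
  by apply: rsum_ext => j; ring.
transitivity (rsum (fun l => if l == i then v i else 0)).
  apply: rsum_ext => l; rewrite AB; case: (eqVneq l i) => [->|ne].
    by rewrite ?eqxx; ring.
  by rewrite ?(eq_sym i l) ?(negbTE ne); ring.
by rewrite /rsum -big_mkcond /= big_pred1_eq.
Qed.

Lemma qform_add (A : mat d) x y : symmetric_mat A ->
  qform A (vadd x y) = qform A x + 2 * dot x (mv A y) + qform A y.
Proof.
by move=> Asym; rewrite /qform mv_add !dot_add_l !dot_add_r (dot_mv_sym y x Asym); ring.
Qed.

Lemma qform_sub (A : mat d) x y : symmetric_mat A ->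
  qform A (vsub x y) = qform A x - 2 * dot x (mv A y) + qform A y.
Proof.
by move=> Asym; rewrite /qform mv_sub !dot_sub_l !dot_sub_r (dot_mv_sym y x Asym); ring.
Qed.

Lemma qform_scale (A : mat d) a x : qform A (vscale a x) = a * a * qform A x.
Proof. by rewrite /qform mv_scale dot_scale_l dot_scale_r; ring. Qed.

Lemma qform_sym_sub (A : mat d) x y : symmetric_mat A ->
  qform A (vsub x y) = qform A (vsub y x).
Proof. by move=> Asym; rewrite !qform_sub // (dot_mv_sym y x Asym); ring. Qed.

Lemma qform_comb (A : mat d) s x y : symmetric_mat A ->
  qform A (vadd (vscale s x) (vscale (1 - s) y)) =
  s * qform A x + (1 - s) * qform A y - s * (1 - s) * qform A (vsub x y).
Proof.
by move=> Asym; rewrite qform_add // qform_sub // !qform_scale mv_scale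
  dot_scale_l dot_scale_r; ring.
Qed.

Lemma qform_ge0 (A : mat d) x : pos_def A -> 0 <= qform A x.
Proof.
move=> Apd; case: (classic (exists i, x i <> 0)) => [nz|]; first exact/Rlt_le/Apd.
move=> zero; have x0 i : x i = 0 by apply: NNPP => xi; apply: zero; exists i.
rewrite /qform /dot (rsum_ext (G := fun _ => 0)) ?rsum0; first lra.
by move=> i; rewrite x0; ring.
Qed.

End VectorAlgebra.

Section HGeometry.
Local Open Scope R_scope.
Variable d : nat.
Variables H Hinv : mat d.
Hypothesis Hsym : symmetric_mat H.
Hypothesis Hpd : pos_def H.
Hypothesis Hinv_inv : is_inverse H Hinv.

Lemma qform_Hinv z : qform H (mv Hinv z) = qform Hinv z.
Proof. by rewrite /qform (mv_inverse _ Hinv_inv) dot_comm. Qed.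

Lemma cauchy_schwarz_H (w D : vec d) lam :
  2 * lam * dot D w <= qform H w + lam * lam * qform Hinv D.
Proof.
have := qform_ge0 (vsub w (vscale lam (mv Hinv D))) Hpd.
rewrite qform_sub // qform_scale mv_scale (mv_inverse _ Hinv_inv) dot_scale_r
  qform_Hinv (dot_comm w D); lra.
Qed.

Lemma anorm_Hinv_eq0 (z : vec d) : anorm Hinv z <= 0 -> forall c, z c = 0.
Proof.
move=> z0; have qz : qform Hinv z <= 0.
  case: (Rle_lt_dec (qform Hinv z) 0) => // qpos.
  by have := sqrt_lt_R0 _ qpos; rewrite /anorm in z0; lra.
have Hinvz0 : mv Hinv z = (fun _ => 0).
  apply: functional_extensionality => i.
  by apply: NNPP => nz; have := Hpd (ex_intro _ i nz); rewrite qform_Hinv; lra.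
move=> c; rewrite -(mv_inverse z Hinv_inv) Hinvz0 /mv (rsum_ext (G := fun _ => 0)) ?rsum0 //.
by move=> j; ring.
Qed.

Variables (h : vec d -> R) (domh : vec d -> Prop) (eta : R) (y : vec d).
Hypothesis eta_gt0 : 0 < eta.
Notation q v := (qsub H Hinv h eta y v).

Lemma qsub_expand v x : q v x =
  h x + / (2 * eta) * qform H (vsub x y) + dot (vsub x y) v
      + eta / 2 * qform H (mv Hinv v).
Proof.
rewrite /qsub qform_add // mv_scale (mv_inverse _ Hinv_inv) dot_scale_r qform_scale.
by field; lra.
Qed.

Lemma qsub_shift v w x z :
  (q v x - q v z) - (q w x - q w z) = dot (vsub x z) (vsub v w).
Proof. by rewrite !qsub_expand !(dot_sub_l, dot_sub_r); ring. Qed.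

Lemma qsub_strongly_convex v x z s :
  convex_ext h domh -> domh x -> domh z -> 0 <= s <= 1 ->
  domh (vadd (vscale s x) (vscale (1 - s) z)) /\
  q v (vadd (vscale s x) (vscale (1 - s) z)) <=
  s * q v x + (1 - s) * q v z - s * (1 - s) * (qform H (vsub x z) / (2 * eta)).
Proof.
move=> hconv dx dz s01; have [dm hm] := hconv x z s s01 dx dz; split => //.
set w := vscale eta (mv Hinv v).
have shift_comb : vadd (vsub (vadd (vscale s x) (vscale (1 - s) z)) y) w =
    vadd (vscale s (vadd (vsub x y) w)) (vscale (1 - s) (vadd (vsub z y) w)).
  by apply: functional_extensionality => i; rewrite /vsub /vadd /vscale; ring.
have shift_diff : vsub (vadd (vsub x y) w) (vadd (vsub z y) w) = vsub x z.
  by apply: functional_extensionality => i; rewrite /vsub /vadd /vscale; ring.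
rewrite /qsub -/w shift_comb qform_comb // shift_diff.
have inv_pos : 0 < / (2 * eta) by apply: Rinv_0_lt_compat; lra.
rewrite /Rdiv; nra.
Qed.

End HGeometry.

Section MiniBatchExpectation.
Local Open Scope R_scope.
Variables n b : nat.
Variable L : 'I_n -> R.
Hypothesis L_ge0 : forall i, 0 <= L i.
Hypothesis Lavg_gt0 : 0 < Lavg L.
Hypothesis n_gt0 : (0 < n)%N.

Lemma INR_n_neq0 : INR n <> 0.
Proof. by apply: not_0_INR; apply/eqP; rewrite -lt0n. Qed.

Lemma sumL_gt0 : 0 < rsum L.
Proof.
have -> : rsum L = INR n * Lavg L by rewrite /Lavg; field; exact: INR_n_neq0.
by apply: Rmult_lt_0_compat => //; apply: lt_0_INR; apply/ltP.
Qed.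

Lemma prob_def i : prob L i = L i / rsum L.
Proof. by rewrite /prob /Lavg; congr (_ / _); field; exact: INR_n_neq0. Qed.

Lemma prob_ge0 i : 0 <= prob L i.
Proof.
rewrite prob_def; apply: Rmult_le_pos => //.
exact/Rlt_le/Rinv_0_lt_compat/sumL_gt0.
Qed.

Lemma prob_sum : rsum (prob L) = 1.
Proof.
rewrite (rsum_ext (G := fun i => / rsum L * L i)); last first.
  by move=> i; rewrite prob_def /Rdiv; ring.
by rewrite rsum_scal; field; have := sumL_gt0; lra.
Qed.

Lemma batch_factor (F : 'I_b -> 'I_n -> R) :
  rsum (fun B : batch n b => rprod (fun l => F l (B l))) =
  rprod (fun l => rsum (fun j => F l j)).
Proof. by rewrite /rsum /rprod bigA_distr_bigA. Qed.

Lemma batch_prob_ge0 (B : batch n b) : 0 <= batch_prob L B.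
Proof. by apply: rprod_ge0 => l; exact: prob_ge0. Qed.

Lemma batch_prob_sum : rsum (fun B : batch n b => batch_prob L B) = 1.
Proof.
rewrite /batch_prob (batch_factor (fun _ j => prob L j)) /rprod.
by rewrite (eq_bigr (fun _ => 1)) ?big1 // => l _; exact: prob_sum.
Qed.

Lemma Eb_coordinate (l0 : 'I_b) (a : 'I_n -> R) :
  Eb L (fun B : batch n b => a (B l0)) = rsum (fun j => prob L j * a j).
Proof.
pose F (l : 'I_b) (j : 'I_n) := prob L j * (if l == l0 then a j else 1).
transitivity (rsum (fun B : batch n b => rprod (fun l => F l (B l)))).
  apply: rsum_ext => B; rewrite /batch_prob /rprod /F [in RHS]big_split /=.
  have -> : \big[Rmult/1]_(l < b) (if l == l0 then a (B l) else 1) = a (B l0).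
    by rewrite (bigD1 l0) //= eqxx big1 ?Rmult_1_r // => l /negbTE ->.
  by [].
rewrite batch_factor /rprod (bigD1 l0) //= big1 ?Rmult_1_r.
  by apply: rsum_ext => j; rewrite /F eqxx.
by move=> l /negbTE ll0; rewrite /F ll0 (rsum_ext (G := prob L)) ?prob_sum // => j; ring.
Qed.

Lemma Eb_const c : Eb L (fun _ : batch n b => c) = c.
Proof.
rewrite /Eb (rsum_ext (G := fun B => c * batch_prob L B)); last by move=> B; ring.
by rewrite rsum_scal batch_prob_sum; ring.
Qed.

Lemma Eb_scale a (F : batch n b -> R) : Eb L (fun B => a * F B) = a * Eb L F.
Proof. by rewrite /Eb -rsum_scal; apply: rsum_ext => B; ring. Qed.

Lemma Eb_add (F G : batch n b -> R) :
  Eb L (fun B => F B + G B) = Eb L F + Eb L G.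
Proof. by rewrite /Eb -rsum_split; apply: rsum_ext => B; ring. Qed.

Lemma Eb_lin a (F G : batch n b -> R) :
  Eb L (fun B => a * F B + G B) = a * Eb L F + Eb L G.
Proof. by rewrite Eb_add Eb_scale. Qed.

Lemma Eb_le (F G : batch n b -> R) : (forall B, F B <= G B) -> Eb L F <= Eb L G.
Proof. by move=> FG; apply: rsum_le => B; apply: Rmult_le_compat_l => //; exact: batch_prob_ge0. Qed.

Lemma Ehist_S m (F : seq (batch n b) -> R) :
  Ehist L m.+1 F = Ehist L m (fun hs => Eb L (fun B => F (B :: hs))).
Proof. by []. Qed.

Lemma Ehist_le m (F G : seq (batch n b) -> R) :
  (forall hs, size hs = m -> F hs <= G hs) -> Ehist L m F <= Ehist L m G.
Proof.
elim: m F G => [|m IH] F G FG /=; first exact: FG.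
by apply: IH => hs hs_m; apply: Eb_le => B; apply: FG; rewrite /= hs_m.
Qed.

Lemma Ehist_lin m a c (F : seq (batch n b) -> R) :
  Ehist L m (fun hs => a * F hs + c) = a * Ehist L m F + c.
Proof.
elim: m F => [|m IH] F //=; rewrite -IH; congr (Ehist L m _).
by apply: functional_extensionality => hs; rewrite -(Eb_const c) -Eb_lin Eb_const.
Qed.

End MiniBatchExpectation.

Section Unbiased.
Local Open Scope R_scope.
Variables (d n b : nat) (H Hinv : mat d) (g : 'I_n -> vec d -> vec d) (L : 'I_n -> R).
Hypothesis Hpd : pos_def H.
Hypothesis Hinv_inv : is_inverse H Hinv.
Hypothesis Lavg_gt0 : 0 < Lavg L.
Hypothesis n_gt0 : (0 < n)%N.
Hypothesis b_gt0 : (0 < b)%N.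
Hypothesis g_lip :
  forall i x y, anorm Hinv (vsub (g i x) (g i y)) <= L i * anorm H (vsub x y).

(* Importance weighting cancels the sampling probabilities; an index with
   p_i = 0 has L_i = 0, so its gradient difference vanishes by Lipschitzness. *)
Lemma importance_weight (xt y : vec d) c j :
  prob L j * ((g j y c - g j xt c) / (INR n * prob L j)) =
  / INR n * (g j y c - g j xt c).
Proof.
case: (Req_dec (prob L j) 0) => [p0|]; last by move=> pj; field; split; [exact: INR_n_neq0|].
have Lj0 : L j = 0.
  move: p0; rewrite prob_def // /Rdiv => /Rmult_integral [//|].
  by have := Rinv_0_lt_compat _ (sumL_gt0 Lavg_gt0 n_gt0); lra.
have := g_lip j y xt; rewrite Lj0 Rmult_0_l => /(anorm_Hinv_eq0 Hpd Hinv_inv).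
by move=> /(_ c); rewrite /vsub p0 => ->; ring.
Qed.

Lemma vest_unbiased (xt y : vec d) c :
  Eb L (fun B : batch n b => vest g L xt y B c) = gavg g y c.
Proof.
have bR : INR b <> 0 by apply: not_0_INR; apply/eqP; rewrite -lt0n.
set a := fun j : 'I_n => (g j y c - g j xt c) / (INR n * prob L j).
have Esum : Eb L (fun B : batch n b => rsum (fun l : 'I_b => a (B l))) =
            INR b * rsum (fun j => prob L j * a j).
  rewrite /Eb (rsum_ext (G := fun B : batch n b =>
      rsum (fun l => batch_prob L B * a (B l)))); last by move=> B; rewrite rsum_scal.
  rewrite rsum_swap -rsum_const; apply: rsum_ext => l.
  exact: (Eb_coordinate Lavg_gt0 n_gt0).
rewrite /vest (Eb_lin L) (Eb_const b Lavg_gt0 n_gt0) Esum.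
rewrite (rsum_ext (importance_weight xt y c)) rsum_scal /gavg.
rewrite (rsum_ext (F := fun j => g j y c - g j xt c)
                  (G := fun j => g j y c + -1 * g j xt c)); last by move=> j; ring.
by rewrite rsum_split rsum_scal; field; split => //; exact: INR_n_neq0.
Qed.

Lemma delta_zero_mean (xt y z : vec d) :
  Eb L (fun B : batch n b => dot (vsub (vest g L xt y B) (gavg g y)) z) = 0.
Proof.
rewrite /Eb (rsum_ext (G := fun B : batch n b => rsum (fun c =>
     batch_prob L B * ((vest g L xt y B c - gavg g y c) * z c))));
  last by move=> B; rewrite /dot /vsub rsum_scal.
rewrite rsum_swap (rsum_ext (G := fun _ => 0)) ?rsum0 // => c.
transitivity (Eb L (fun B : batch n b => z c * vest g L xt y B c + - (z c * gavg g y c))).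
  by apply: rsum_ext => B; ring.
by rewrite (Eb_lin L) (Eb_const b Lavg_gt0 n_gt0) vest_unbiased; ring.
Qed.

End Unbiased.

Lemma approx_minimizer (T : Type) (dom : T -> Prop) (phi : T -> R) (m delta : R) :
  (exists x, dom x) -> (forall x, dom x -> m <= phi x)%R -> (0 < delta)%R ->
  exists c, dom c /\ forall x, dom x -> (phi c <= phi x + delta)%R.
Proof.
move=> [x0 dx0] lb delta_gt0.
pose E z := exists x, dom x /\ z = (- phi x)%R.
have bE : bound E by exists (- m)%R => z [x [dx ->]]; have := lb x dx; lra.
have [l [ub lub]] := completeness E bE (ex_intro _ _ (ex_intro _ x0 (conj dx0 erefl))).
apply: NNPP => none.
suff : is_upper_bound E (l - delta)%R by move=> /lub; lra.
move=> z [x [dx ->]]; apply: Rnot_lt_le => lt; apply: none; exists x; split => // x' dx'.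
by have := ub _ (ex_intro _ x' (conj dx' erefl)); lra.
Qed.

Lemma le0_of_le_scaled (a b : R) :
  (forall r, 0 < r <= 1 -> a <= r * b)%R -> (a <= 0)%R.
Proof.
move=> ab; apply: Rle_plus_epsilon => e e_gt0.
have := Rabs_pos b; have := Rle_abs b => b_le_abs abs_ge0.
set r := (e / (Rabs b + e))%R.
have rdef : (r * (Rabs b + e) = e)%R by rewrite /r; field; lra.
have r_gt0 : (0 < r)%R by apply: Rdiv_lt_0_compat; lra.
have r_le1 : (r <= 1)%R.
  apply: (Rmult_le_reg_r e) => //; rewrite -{2}rdef; nra.
have := ab r (conj r_gt0 r_le1); nra.
Qed.

Section InexactStep.
Local Open Scope R_scope.
Variables (d n b : nat) (H Hinv : mat d) (L : 'I_n -> R).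
Variables (h : vec d -> R) (domh : vec d -> Prop) (eta eps : R) (y : vec d).
Hypothesis Hsym : symmetric_mat H.
Hypothesis Hpd : pos_def H.
Hypothesis Hinv_inv : is_inverse H Hinv.
Hypothesis hconv : convex_ext h domh.
Hypothesis eta_gt0 : 0 < eta.
Notation q v := (qsub H Hinv h eta y v).

(* Pointwise comparison of an eps-optimal X for q v with an (r^2)-optimal c
   for q w; the constant 3/2 comes from mixing at 1/2 for X and at r for c. *)
Lemma pointwise_bound (v w X c : vec d) r :
  0 < r <= 1 ->
  eps_optimal H Hinv h domh eta y v eps X ->
  domh c -> (forall x, domh x -> q w c <= q w x + r * r) ->
  (2 - 2 * r) * dot (vsub v w) (vsub c X) <=
  2 * eps + r + eta * (3 - 2 * r) * qform Hinv (vsub v w).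
Proof.
move=> r01 [dX X_opt] dc c_opt.
set P := dot (vsub v w) (vsub c X); set N := qform Hinv (vsub v w).
set kappa := qform H (vsub c X) / (2 * eta).
have X_gap : q v X - q v c <= - kappa / 2 + 2 * eps.
  have half01 : 0 <= 1/2 <= 1 by lra.
  have [dm qm] := qsub_strongly_convex Hinv Hsym y eta_gt0 v hconv dc dX half01.
  by have := X_opt _ dm; rewrite -/kappa in qm; lra.
have c_gap : (1 - r) * kappa - r <= q w X - q w c.
  have r01' : 0 <= r <= 1 by lra.
  have [dm qm] := qsub_strongly_convex Hinv Hsym y eta_gt0 w hconv dX dc r01'.
  have := c_opt _ dm; rewrite qform_sym_sub // -/kappa in qm => copt.
  by apply: (Rmult_le_reg_l r); lra.
have P_split : P = (q w X - q w c) - (q v X - q v c).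
  by rewrite /P dot_comm -(qsub_shift Hsym Hinv_inv h y eta_gt0 v w c X); ring.
have cs : 2 * P <= kappa + 2 * eta * N.
  have := cauchy_schwarz_H Hsym Hpd Hinv_inv (vsub c X) (vsub v w) (2 * eta).
  rewrite -/P -/N (_ : qform H (vsub c X) = 2 * eta * kappa); last first.
    by rewrite /kappa; field; lra.
  by move=> ineq; apply: (Rmult_le_reg_l (2 * eta)); lra.
have P_lower : (3 - 2 * r) / 2 * kappa - 2 * eps - r <= P by lra.
(* Eliminate kappa between P_lower and the Cauchy-Schwarz bound. *)
have : (3 - 2 * r) / 2 * (2 * P - 2 * eta * N) <= (3 - 2 * r) / 2 * kappa.
  by apply: Rmult_le_compat_l; lra.
lra.
Qed.

Variables (gy u0 : vec d) (V X : batch n b -> vec d).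
Hypothesis L_ge0 : forall i, 0 <= L i.
Hypothesis Lavg_gt0 : 0 < Lavg L.
Hypothesis n_gt0 : (0 < n)%N.
Hypothesis hproper : proper_ext domh.
Hypothesis X_opt : forall B, eps_optimal H Hinv h domh eta y (V B) eps (X B).
Hypothesis delta_mean0 : forall z, Eb L (fun B => dot (vsub (V B) gy) z) = 0.

(* The deterministic subproblem q gy is the average of the q (V B) up to a
   constant, hence bounded below on dom h. *)
Lemma qsub_mean_bounded_below x0 : domh x0 -> forall x, domh x ->
  q gy x0 + Eb L (fun B => q (V B) (X B) - eps - q (V B) x0) <= q gy x.
Proof.
move=> dx0 x dx.
have mean_shift : Eb L (fun B => q (V B) x - q (V B) x0) = q gy x - q gy x0.
  rewrite -[RHS]Rplus_0_r -(delta_mean0 (vsub x x0)).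
  rewrite -(Eb_const b Lavg_gt0 n_gt0 (q gy x - q gy x0)) -Eb_add.
  apply: rsum_ext => B; congr (_ * _).
  by have := qsub_shift Hsym Hinv_inv h y eta_gt0 (V B) gy x x0; rewrite dot_comm; lra.
suff : Eb L (fun B => q (V B) (X B) - eps - q (V B) x0) <= q gy x - q gy x0 by lra.
rewrite -mean_shift; apply: (Eb_le L_ge0 Lavg_gt0 n_gt0) => B.
by have [_ opt] := X_opt B; have := opt x dx; lra.
Qed.

Lemma inexact_step :
  Eb L (fun B => dot (vsub (V B) gy) (vsub u0 (X B))) <=
  3 * eta / 2 * Eb L (fun B => qform Hinv (vsub (V B) gy)) + eps.
Proof.
set EP := Eb L _; set EN := Eb L _.
suff : 2 * EP - 2 * eps - 3 * eta * EN <= 0 by lra.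
(* It suffices that (2 - 2r) EP <= 2 eps + r + (3 - 2r) eta EN for all r in (0, 1]. *)
apply: (@le0_of_le_scaled _ (2 * EP + 1 - 2 * eta * EN)) => r r01.
have [x0 dx0] := hproper.
have [c [dc c_opt]] := approx_minimizer hproper (qsub_mean_bounded_below dx0)
  (Rmult_lt_0_compat r r (proj1 r01) (proj1 r01)).
have EP_c : EP = Eb L (fun B => dot (vsub (V B) gy) (vsub c (X B))).
  rewrite -[RHS]Rplus_0_l -(delta_mean0 (vsub u0 c)) -Eb_add; apply: rsum_ext => B.
  by rewrite !dot_sub_r; ring.
have := Eb_le L_ge0 Lavg_gt0 n_gt0 (fun B => pointwise_bound r01 (X_opt B) dc c_opt).
rewrite Eb_scale -EP_c.
have -> : Eb L (fun B => 2 * eps + r + eta * (3 - 2 * r) * qform Hinv (vsub (V B) gy)) =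
          eta * (3 - 2 * r) * EN + (2 * eps + r).
  rewrite /EN -[in RHS](Eb_const b Lavg_gt0 n_gt0 (2 * eps + r)) -Eb_lin.
  by apply: rsum_ext => B; ring.
lra.
Qed.

End InexactStep.

Unset Implicit Arguments.

Lemma state_fst d n b (eta tau mu : R) (g : 'I_n -> vec d -> vec d)
  (L : 'I_n -> R) (xt : vec d) (S : seq (batch n b) -> vec d) B hs :
  fst (state eta tau mu g L xt S (B :: hs)) = S (B :: hs).
Proof. by rewrite /=; case: (state eta tau mu g L xt S hs). Qed.

Theorem lemma5 (d n b : nat) (H Hinv : mat d)
  (f : 'I_n -> vec d -> R) (g : 'I_n -> vec d -> vec d) (L : 'I_n -> R) (mu : R)
  (h : vec d -> R) (domh : vec d -> Prop)
  (eta tau : R) (T k : nat) (eps : nat -> R) (xt : vec d)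
  (sol : seq (batch n b) -> vec d) (u : seq (batch n b) -> vec d) :
  (0 < n)%N -> (0 < b)%N ->
  symmetric_mat H -> pos_def H -> is_inverse H Hinv ->
  (forall i, has_gradient (f i) (g i)) ->
  (forall i, convex_fun (f i)) ->
  (* Assumption 1 *)
  (forall i, (0 <= L i)%R) -> (0 < Lavg L)%R ->
  (forall i x y, (anorm Hinv (vsub (g i x) (g i y)) <= L i * anorm H (vsub x y))%R) ->
  (* Assumption 2 *)
  (0 < mu)%R ->
  (forall x y, (favg f y >= favg f x + dot (gavg g x) (vsub y x)
                               + mu / 2 * qform H (vsub y x))%R) ->
  (* h proper, convex, lsc, with closed domain *)
  proper_ext domh -> convex_ext h domh -> lsc_ext h domh -> closed_vset domh ->
  (* parameters of Algorithm 2 *)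
  (0 < eta <= / Lavg L)%R -> (0 < tau < 1)%R ->
  (forall j, (0 <= eps j)%R) -> (k < T)%N ->
  (* x_{j+1} = sol [:: B_j; ...; B_0] is an eps_j-optimal solution of the j-th subproblem *)
  (forall hs : seq (batch n b), (1 <= size hs <= T)%N ->
     eps_optimal H Hinv h domh eta
       (ystep eta tau mu g L xt sol (behead hs)) (vstep eta tau mu g L xt sol hs)
       (eps (size hs).-1) (sol hs)) ->
  (* u_k is determined by B_0..B_{k-1}: u_k = u [:: B_{k-1}; ...; B_0] *)
  (Ehist L k.+1 (fun hs => dot (delta_step eta tau mu g L xt sol hs)
                             (vsub (u (behead hs)) (fst (state eta tau mu g L xt sol hs))))
   <= 3 * eta / 2 * Ehist L k.+1 (fun hs => qform Hinv (delta_step eta tau mu g L xt sol hs))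
      + eps k)%R.
Proof.
move=> n_gt0 b_gt0 Hsym Hpd Hinv_inv _ _ L_ge0 Lavg_gt0 g_lip _ _ hproper hconv _ _
  [eta_gt0 _] _ _ kT sol_opt.
(* Condition on B_0, ..., B_{k-1} and average over the last batch B_k. *)
rewrite !Ehist_S -(Ehist_lin Lavg_gt0 n_gt0).
apply: (Ehist_le L_ge0 Lavg_gt0 n_gt0) => hs size_hs.
set y := ystep eta tau mu g L xt sol hs.
rewrite [X in (X <= _)%R]/Eb /rsum; under eq_bigr => B _ do rewrite state_fst.
apply: (inexact_step Hsym Hpd Hinv_inv hconv eta_gt0 (y := y) (gy := gavg g y) (u hs)
  (V := fun B => vest g L xt y B) (X := fun B => sol (B :: hs)) L_ge0 Lavg_gt0 n_gt0 hproper).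
- by move=> B; have := sol_opt (B :: hs); rewrite /= size_hs kT; apply.
- exact: (delta_zero_mean Hpd Hinv_inv Lavg_gt0 n_gt0 b_gt0 g_lip).
Qed.
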